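(* For every $\mathbf b_j\in\mathcal B_k$, \[F^{(\mathbf b_j)}_{\mathbf b_i}(\lambda)=\lambda^{s_0^{(j)}}\sum_{s=0}^\infty\frac{\prod_{r=1}^m\prod_{\sigma=0}^{\ell_r-1}\big(\frac{v^{(i)}_r+\sigma}{\ell_r}+\frac{s_0^{(j)}}{\ell_0}\big)_s}{\prod_{t=1}^{\ell_0}\big(\frac{t}{\ell_0}+\frac{s_0^{(j)}}{\ell_0}\big)_s}\lambda^{s\ell_0};\] that is, $F^{(\mathbf b_j)}_{\mathbf b_i}(\lambda)$ is obtained from the series $F^{(\mathbf b_i)}_{\mathbf b_i}(\lambda)=\sum_{s\ge0}\frac{\prod_r\prod_\sigma((v^{(i)}_r+\sigma)/\ell_r)_s}{\prod_{t=1}^{\ell_0}(t/\ell_0)_s}\lambda^{s\ell_0}$ by multiplying by $\lambda^{s_0^{(j)}}$ and adding $s_0^{(j)}/\ell_0$ to each Pochhammer parameter. In particular $\frac{v^{(i)}_r}{\ell_r}+\frac{s_0^{(j)}}{\ell_0}=\frac{v^{(j)}_r-s^{(j)}_r}{\ell_r}$ for $r=1,\dots,m$.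
   Context: Let $A=\{\mathbf a_1,\dots,\mathbf a_m\}\subseteq\mathbb Z^n$ be linearly independent over $\mathbb R$, $\mathbf a_0\in\mathbb Z^n$, and $\ell_0,\dots,\ell_m$ positive integers with gcd $1$, $\ell_0\mathbf a_0=\sum_{j=1}^m\ell_j\mathbf a_j$, $\ell_0=\sum_{j=1}^m\ell_j$. Let $\mathbb ZA$, $\mathbb ZA_+$ be the groups generated by $A$ and $A\cup\{\mathbf a_0\}$. Let $V$ be the real span of $A$, $V_{\mathbb Z}=V\cap\mathbb Z^n$, $P(A)=\{\sum_jc_j\mathbf a_j:0\le c_j<1\}$, $\mathcal B=V_{\mathbb Z}\cap P(A)$. Fix a coset $\mathcal C_k$ of $\mathbb ZA_+$ in $V_{\mathbb Z}$ and put $\mathcal B_k=\mathcal B\cap\mathcal C_k$. Fix $\mathbf b_i\in\mathcal B_k$. For $\mathbf b_j\in\mathcal B_k$ write $\mathbf b_j=\sum_rv^{(j)}_r\mathbf a_r$ with $v^{(j)}_r\in[0,1)$, let $s_0^{(j)}\in\{0,\dots,\ell_0-1\}$ be the unique element with $\mathbf b_i+s_0^{(j)}\mathbf a_0\equiv\mathbf b_j\pmod{\mathbb ZA}$, and let $s^{(j)}_r\in\mathbb Z$ be determined by $\mathbf b_i+s_0^{(j)}\mathbf a_0=\mathbf b_j-\sum_rs^{(j)}_r\mathbf a_r$ (so $s^{(i)}_r=0$ for $r=0,\dots,m$). Define \[F^{(\mathbf b_j)}_{\mathbf b_i}(\lambda)=\lambda^{s_0^{(j)}}\sum_{s=0}^\infty\frac{\prod_{r=1}^m\prod_{\sigma=0}^{\ell_r-1}\big(\frac{v^{(j)}_r-s^{(j)}_r+\sigma}{\ell_r}\big)_s}{\prod_{t=1}^{\ell_0}\big(\frac{s^{(j)}_0+t}{\ell_0}\big)_s}\lambda^{s\ell_0},\]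 with $(a)_s=a(a+1)\cdots(a+s-1)$. *)

From HB Require Import structures.
From mathcomp Require Import all_boot all_order all_algebra.
From mathcomp Require Import reals.

Set Implicit Arguments.
Unset Strict Implicit.
Unset Printing Implicit Defensive.

Import Order.TTheory GRing.Theory Num.Theory.
Local Open Scope ring_scope.

(* Integer vectors of Z^n are rows 'rV[int]_n; the index r = 1..m of the
   paper is represented by 'I_m (r-th element is index r-1). *)

Definition toR (R : ringType) (n : nat) (x : 'rV[int]_n) : 'rV[R]_n :=
  map_mx (fun z : int => z%:~R) x.

Definition lin_indep (R : ringType) (n m : nat) (a : 'I_m -> 'rV[R]_n) :=
  forall c : 'I_m -> R, \sum_(r < m) c r *: a r = 0 -> forall r, c r = 0.

Definition in_span (R : ringType) (n m : nat) (a : 'I_m -> 'rV[R]_n)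
  (x : 'rV[R]_n) := exists c : 'I_m -> R, x = \sum_(r < m) c r *: a r.

Definition in_parallelepiped (R : realDomainType) (n m : nat)
  (a : 'I_m -> 'rV[R]_n) (x : 'rV[R]_n) :=
  exists c : 'I_m -> R, (forall r, 0 <= c r < 1) /\ x = \sum_(r < m) c r *: a r.

Definition in_ZAplus (n m : nat) (a0 : 'rV[int]_n) (a : 'I_m -> 'rV[int]_n)
  (x : 'rV[int]_n) :=
  exists (z0 : int) (z : 'I_m -> int), x = z0 *: a0 + \sum_(r < m) z r *: a r.

Definition poch (R : ringType) (a : R) (s : nat) : R :=
  \prod_(k < s) (a + k%:R).

(* Formal power series in lambda, represented by its coefficient sequence
   (N |-> coefficient of lambda^N).  [lam_series l0 e c] is the formal series
   lambda^e * \sum_{s >= 0} c s * lambda^(s * l0)  (for l0 > 0). *)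
Definition lam_series (R : ringType) (l0 e : nat) (c : nat -> R) : nat -> R :=
  fun N => if ((e <= N) && (l0 %| (N - e)))%N then c ((N - e) %/ l0)%N else 0.

(* Coefficient of lambda^(s0 + s l0) / lambda^s0 in F^{(b_j)}_{b_i}. *)
Definition F_coef (R : fieldType) (m : nat) (l : 'I_m -> nat) (l0 : nat)
  (v : 'I_m -> R) (sv : 'I_m -> int) (s0 : nat) (s : nat) : R :=
  (\prod_(r < m) \prod_(sigma < l r)
      poch ((v r - (sv r)%:~R + sigma%:R) / (l r)%:R) s)
  / (\prod_(t < l0) poch ((s0 + t.+1)%:R / l0%:R) s).

Definition F_series (R : fieldType) (m : nat) (l : 'I_m -> nat) (l0 : nat)
  (v : 'I_m -> R) (sv : 'I_m -> int) (s0 : nat) : nat -> R :=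
  lam_series l0 s0 (F_coef l l0 v sv s0).

From HB Require Import structures.
From mathcomp Require Import all_boot all_order all_algebra.
From mathcomp Require Import reals.
From mathcomp Require Import ring.
From mathcomp Require boolp.
Set Implicit Arguments.
Unset Strict Implicit.
Unset Printing Implicit Defensive.

Import Order.TTheory GRing.Theory Num.Theory.
Local Open Scope ring_scope.

(* Write b_i = sum_r v_r^(i) a_r and l_0 a_0 = sum_r l_r a_r.  Multiplying
   b_i + s_0 a_0 = b_j - sum_r s_r a_r by l_0 and comparing coordinates in the
   linearly independent family a_1, ..., a_m gives
   l_0 v_r^(i) + s_0 l_r = l_0 (v_r^(j) - s_r), i.e.
   v_r^(i)/l_r + s_0/l_0 = (v_r^(j) - s_r)/l_r.  Hence each numerator parameter
   of F^(b_j)_(b_i) is the corresponding parameter of F^(b_i)_(b_i) shifted by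
   s_0/l_0, and so is each denominator parameter (s_0 + t)/l_0 = t/l_0 + s_0/l_0. *)

Section IntegerVectors.

Variables (R : nzRingType) (n : nat).

Lemma toRD (x y : 'rV[int]_n) : toR R (x + y) = toR R x + toR R y.
Proof. exact: map_mxD. Qed.

Lemma toRB (x y : 'rV[int]_n) : toR R (x - y) = toR R x - toR R y.
Proof. exact: map_mxB. Qed.

Lemma toR_sum m (x : 'I_m -> 'rV[int]_n) :
  toR R (\sum_(r < m) x r) = \sum_(r < m) toR R (x r).
Proof. exact: map_mx_sum. Qed.

Lemma toRZ (z : int) (x : 'rV[int]_n) : toR R (z *: x) = z%:~R *: toR R x.
Proof. by apply/matrixP => i j; rewrite !mxE intrM. Qed.

End IntegerVectors.

Lemma lin_indep_coord_uniq (R : nzRingType) n m (A : 'I_m -> 'rV[R]_n)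
    (c d : 'I_m -> R) :
  lin_indep A -> \sum_(r < m) c r *: A r = \sum_(r < m) d r *: A r -> c =1 d.
Proof.
move=> indA Ecd r; apply/eqP; rewrite -subr_eq0; apply/eqP.
apply: (indA (fun r => c r - d r)).
under eq_bigr do rewrite scalerBl.
by rewrite sumrB Ecd subrr.
Qed.

Lemma lin_indep_coord_shift (R : comNzRingType) n m (A : 'I_m -> 'rV[R]_n)
    (x0 xi xj : 'rV[R]_n) (vi vj w u : 'I_m -> R) (k s : R) :
    lin_indep A ->
    xi = \sum_(r < m) vi r *: A r -> xj = \sum_(r < m) vj r *: A r ->
    k *: x0 = \sum_(r < m) w r *: A r ->
    xi + s *: x0 = xj - \sum_(r < m) u r *: A r ->
  forall r, k * vi r + s * w r = k * (vj r - u r).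
Proof.
move=> indA Exi Exj Ex0 Eij.
apply: (lin_indep_coord_uniq (c := fun r => k * vi r + s * w r)
                             (d := fun r => k * (vj r - u r)) indA).
under eq_bigr do rewrite scalerDl -!scalerA.
under [RHS]eq_bigr do rewrite -scalerA scalerBl.
rewrite big_split /= -!scaler_sumr sumrB -Exi -Exj -Ex0.
by rewrite scalerA mulrC -scalerA -scalerDr Eij.
Qed.

Lemma shift_divf (R : fieldType) (k w s x y : R) :
  k != 0 -> w != 0 -> k * x + s * w = k * y -> x / w + s / k = y / w.
Proof.
move=> k_neq0 w_neq0 E.
have -> : y = (k * x + s * w) / k by rewrite E mulrC mulKf.
by field; apply/andP.
Qed.

Lemma F_coef_shift (R : fieldType) m (l : 'I_m -> nat) (l0 : nat)
    (vi vj : 'I_m -> R) (sj : 'I_m -> int) (s0 : nat) :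
    (forall r, vi r / (l r)%:R + s0%:R / l0%:R = (vj r - (sj r)%:~R) / (l r)%:R) ->
  F_coef l l0 vj sj s0 =1 (fun s =>
    (\prod_(r < m) \prod_(sigma < l r)
        poch ((vi r + sigma%:R) / (l r)%:R + s0%:R / l0%:R) s)
    / (\prod_(t < l0) poch (t.+1%:R / l0%:R + s0%:R / l0%:R) s)).
Proof.
move=> Eshift s; congr (_ / _).
  apply: eq_bigr => r _; apply: eq_bigr => sigma _; congr poch.
  by rewrite mulrDl -Eshift mulrDl addrAC.
by apply: eq_bigr => t _; rewrite natrD mulrDl addrC.
Qed.

Lemma eq_lam_series (R : nzRingType) (l0 e : nat) (c d : nat -> R) :
  c =1 d -> lam_series l0 e c = lam_series l0 e d.
Proof. by move=> Ecd; apply: boolp.funext => N; rewrite /lam_series Ecd. Qed.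

Theorem proposition6p9 (R : realType) (n m : nat)
    (a : 'I_m -> 'rV[int]_n) (a0 : 'rV[int]_n)
    (l : 'I_m -> nat) (l0 : nat)
    (c bi bj : 'rV[int]_n)
    (vi vj : 'I_m -> R) (s0 : nat) (sj : 'I_m -> int) :
  (* A linearly independent over R *)
  lin_indep (fun r => toR R (a r)) ->
  (* l_0, ..., l_m positive with gcd 1 *)
  (0 < l0)%N -> (forall r, 0 < l r)%N ->
  gcdn l0 (\big[gcdn/0%N]_(r < m) l r) = 1%N ->
  l0%:Z *: a0 = \sum_(r < m) (l r)%:Z *: a r ->
  l0 = (\sum_(r < m) l r)%N ->
  (* C_k = c + Z A_+ is a coset of Z A_+ in V_Z *)
  in_span (fun r => toR R (a r)) (toR R c) ->
  (* b_i, b_j in B_k = B \cap C_k, with B = V_Z \cap P(A) *)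
  in_parallelepiped (fun r => toR R (a r)) (toR R bi) ->
  in_ZAplus a0 a (bi - c) ->
  in_parallelepiped (fun r => toR R (a r)) (toR R bj) ->
  in_ZAplus a0 a (bj - c) ->
  (* coordinates v^(i), v^(j) in [0,1) *)
  (forall r, 0 <= vi r < 1) -> toR R bi = \sum_(r < m) vi r *: toR R (a r) ->
  (forall r, 0 <= vj r < 1) -> toR R bj = \sum_(r < m) vj r *: toR R (a r) ->
  (* s_0^(j) in {0,...,l0-1} and s_r^(j) with
     b_i + s_0 a_0 = b_j - sum_r s_r a_r *)
  (s0 < l0)%N ->
  bi + s0%:Z *: a0 = bj - \sum_(r < m) sj r *: a r ->
  (forall r, vi r / (l r)%:R + s0%:R / l0%:R = (vj r - (sj r)%:~R) / (l r)%:R)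
  /\
  F_series l l0 vj sj s0 =
  lam_series l0 s0 (fun s =>
    (\prod_(r < m) \prod_(sigma < l r)
        poch ((vi r + sigma%:R) / (l r)%:R + s0%:R / l0%:R) s)
    / (\prod_(t < l0) poch (t.+1%:R / l0%:R + s0%:R / l0%:R) s)).
Proof.
move=> indA l0_gt0 l_gt0 _ Ea0 _ _ _ _ _ _ _ Ebi _ Ebj _ Eb.
have Ea0R : l0%:R *: toR R a0 = \sum_(r < m) (l r)%:R *: toR R (a r).
  move/(congr1 (@toR R n)): Ea0; rewrite toRZ toR_sum => ->.
  by apply: eq_bigr => r _; rewrite toRZ.
have EbR : toR R bi + s0%:R *: toR R a0
           = toR R bj - \sum_(r < m) (sj r)%:~R *: toR R (a r).
  move/(congr1 (@toR R n)): Eb; rewrite toRD toRZ toRB toR_sum => ->.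
  by congr (_ - _); apply: eq_bigr => r _; rewrite toRZ.
have Eshift r : vi r / (l r)%:R + s0%:R / l0%:R = (vj r - (sj r)%:~R) / (l r)%:R.
  apply: shift_divf; rewrite ?pnatr_eq0 -?lt0n //.
  exact: (lin_indep_coord_shift indA Ebi Ebj Ea0R EbR).
split=> //.
exact/eq_lam_series/F_coef_shift.
Qed.
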